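(* Let $\prec$ be an exchangeable random total order on $\mathbb{I}_0=\{a_1,b_1,a_2,b_2,\dots\}$ and let $d$ be the associated function defined below. If $x,y \in \mathbb{I}_0$ with $x \ne y$, then $d(x,y) > 0$ almost surely. Therefore almost surely $d$ is a metric on $\mathbb{I}_0$.
   Context: $\mathbb{I}_0 := \bigcup_{n\in\mathbb{N}}\{a_n,b_n\}$ (all symbols distinct). A random total order $\prec$ on $\mathbb{I}_0$ is a map from the probability space to total orders on $\mathbb{I}_0$ such that $\mathbf{1}\{x\prec y\}$ is a random variable for all $x,y$. It is exchangeable if for every $n\in\mathbb{N}$ and all permutations $\sigma,\tau$ of $\{1,\dots,n\}$ the induced order $\prec^n$ on $\bigcup_{k=1}^n\{a_k,b_k\}$ has the same distribution as $\prec^n_{\sigma,\tau}$, defined by: $a_{\sigma(i)}\prec^n_{\sigma,\tau}b_{\tau(j)}$ iff $a_i\prec^n b_j$; $b_{\tau(i)}\prec^n_{\sigma,\tau}a_{\sigma(j)}$ iff $b_i\prec^n a_j$; $a_{\sigma(i)}\prec^n_{\sigma,\tau}a_{\sigma(j)}$ iff $a_i\prec^n a_j$; $b_{\tau(i)}\prec^n_{\sigma,\tau}b_{\tau(j)}$ iff $b_i\prec^n b_j$. Define $d:\mathbb{I}_0\times\mathbb{I}_0\to[0,1]$ by $d(x,x)=0$, $d(x,y)=d(y,x)$, and for $x\prec y$: \[ d(x,y) := \limsup_{n\to\infty}\frac{1}{2n}\#\{1\le k\le n: x\prec a_k\prec y\} + \limsup_{n\to\infty}\frac{1}{2n}\#\{1\le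 \ell\le n: x\prec b_\ell\prec y\}. \] *)

From HB Require Import structures.
From mathcomp Require Import all_boot all_order all_algebra all_fingroup.
From mathcomp Require Import all_classical all_reals all_analysis.
Set Implicit Arguments. Unset Strict Implicit. Unset Printing Implicit Defensive.
Import Order.TTheory GRing.Theory Num.Theory.
Local Open Scope classical_set_scope.
Local Open Scope ring_scope.

(* I_0 = { a_k, b_k : k in N }.  An element is (c, k) with c = false for a_k
   and c = true for b_k.  Indices are 0-based: a_0, a_1, ... *)
Definition I0 := (bool * nat)%type.
Definition a_ (k : nat) : I0 := (false, k).
Definition b_ (k : nat) : I0 := (true, k).

Definition strict_total_order (r : I0 -> I0 -> bool) : Prop :=
  (forall x, ~~ r x x) /\
  (forall x y z, r x y -> r y z -> r x z) /\
  (forall x y, x <> y -> r x y \/ r y x).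

Definition random_total_order d (T : measurableType d)
    (ord : T -> I0 -> I0 -> bool) : Prop :=
  (forall w, strict_total_order (ord w)) /\
  (forall x y, measurable [set w | ord w x y]).

Definition embI n (u : bool * 'I_n) : I0 := (u.1, nat_of_ord u.2).

Definition relabel n (s t : 'S_n) (u : bool * 'I_n) : bool * 'I_n :=
  (u.1, if u.1 then t u.2 else s u.2).

Definition induced_order n (r : I0 -> I0 -> bool) : bool * 'I_n -> bool * 'I_n -> bool :=
  fun u v => r (embI u) (embI v).

(* The order ≺^n_{σ,τ}: relabel(u) ≺_{σ,τ} relabel(v) iff u ≺^n v. *)
Definition permuted_order n (s t : 'S_n) (r : I0 -> I0 -> bool)
    : bool * 'I_n -> bool * 'I_n -> bool :=
  fun u v => @induced_order n r (relabel (s^-1)%g (t^-1)%g u) (relabel (s^-1)%g (t^-1)%g v).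

Definition exchangeable d (T : measurableType d) (R : realType)
    (P : probability T R) (ord : T -> I0 -> I0 -> bool) : Prop :=
  forall (n : nat) (s t : 'S_n) (A : set (bool * 'I_n -> bool * 'I_n -> bool)),
    P [set w | A (@induced_order n (ord w))] =
    P [set w | A (permuted_order s t (ord w))].

(* #{ 1 <= k <= n : x ≺ a_k ≺ y } with 0-based indexing: k < n. *)
Definition count_between (r : I0 -> I0 -> bool) (c : bool) (x y : I0) (n : nat) : nat :=
  #|[set k : 'I_n | r x (c, nat_of_ord k) && r (c, nat_of_ord k) y]|.

(* limsup_n (1/(2n)) #{...}; the sequence is indexed from n = 1 (shift by one). *)
Definition half_density (R : realType) (r : I0 -> I0 -> bool) (c : bool) (x y : I0) : R :=
  limn_sup (fun n : nat => (count_between r c x y n.+1)%:R / (2 * (n.+1)%:R) : R).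

Definition dist_ord (R : realType) (r : I0 -> I0 -> bool) (x y : I0) : R :=
  half_density R r false x y + half_density R r true x y.

Definition dfun (R : realType) (r : I0 -> I0 -> bool) (x y : I0) : R :=
  if x == y then 0 else if r x y then dist_ord R r x y else dist_ord R r y x.

Definition is_metric (R : realType) (dd : I0 -> I0 -> R) : Prop :=
  (forall x y, 0 <= dd x y) /\
  (forall x y, dd x y = 0 <-> x = y) /\
  (forall x y, dd x y = dd y x) /\
  (forall x y z, dd x z <= dd x y + dd y z).

From HB Require Import structures.
From mathcomp Require Import all_boot all_order all_algebra all_fingroup.
From mathcomp Require Import all_classical all_reals all_analysis.
From mathcomp Require Import measurable_realfun lra zify.
Import Order.TTheory GRing.Theory Num.Theory.

Set Implicit Arguments. Unset Strict Implicit. Unset Printing Implicit Defensive.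

(* For every total order, d(x, y) is the sum over the two colours of the upper
   density of the points of that colour lying between x and y; these densities
   are symmetric and subadditive, so d is a pseudometric and only d(x, y) > 0 is
   probabilistic.  Let x = a_i (or b_i) and fix m.  In a total order at most
   2(m+1) points a_k have at most m points a_l between them and y, whereas by
   exchangeability each of the n - 1 points a_k other than y is equally likely
   to be one of them.  Hence, for large n, with probability at most 5/(K+1),
   fewer than 2(n+1)/(K+1) of the points a_l with l <= n lie between x and y;
   so for every K the event that this holds for all large n has probability
   at most 5/(K+1), and d(x, y) = 0 is a null event. *)

Definition betweenb (r : rel I0) (p q z : I0) : bool :=
  (r p z && r z q) || (r q z && r z p).

Definition count_betw (r : rel I0) (c : bool) (p q : I0) (n : nat) : nat :=
  #|[set k : 'I_n | betweenb r p q (c, val k)]|.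

Lemma count_betwC r c p q n : count_betw r c p q n = count_betw r c q p n.
Proof. by apply: eq_card => k; rewrite !inE /betweenb orbC. Qed.

Lemma count_betw_le r c p q n : count_betw r c p q n <= n.
Proof. by apply: leq_trans (max_card _) _; rewrite card_ord. Qed.

Lemma count_between_set r c x y n :
  count_between r c x y n = #|[set k : 'I_n | r x (c, val k) && r (c, val k) y]|.
Proof. by apply: eq_card => k; rewrite inE unfold_in /in_set asboolb. Qed.

Lemma strict_total_order_flip (r : rel I0) :
  strict_total_order r -> strict_total_order (fun x y => r y x).
Proof.
case=> irr [tr tot]; split=> //; split=> [x y z rxy ryz|x y /tot]; first exact: tr ryz rxy.
by case; auto.
Qed.

Lemma count_betw_flip r c p q n :
  count_betw (fun x y => r y x) c p q n = count_betw r c p q n.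
Proof. by apply: eq_card => k; rewrite !inE /betweenb orbC !(andbC (r _ p)) !(andbC (r _ q)). Qed.

Section StrictTotalOrder.
Variable r : rel I0.
Hypothesis hr : strict_total_order r.

Lemma sto_irr x : ~~ r x x. Proof. by case: hr. Qed.
Lemma sto_trans x y z : r x y -> r y z -> r x z. Proof. by case: hr => _ [+ _]; apply. Qed.
Lemma sto_total x y : x <> y -> r x y \/ r y x. Proof. by case: hr => _ [_]; apply. Qed.
Lemma sto_asym x y : r x y -> ~~ r y x.
Proof. by move=> rxy; apply/negP => /(sto_trans rxy); apply/negP/sto_irr. Qed.

Lemma count_betw_id c p n : count_betw r c p p n = 0.
Proof.
apply: eq_card0 => k; rewrite !inE /betweenb orbb.
by apply/negbTE/negP => /andP[/sto_asym/negP].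
Qed.

Lemma count_between_betw c p q n :
  r p q -> count_between r c p q n = count_betw r c p q n.
Proof.
move=> rpq; rewrite count_between_set; apply: eq_card => k; rewrite !inE /betweenb.
have -> : r q (c, val k) && r (c, val k) p = false.
  by apply/negbTE/negP => /andP[rqk /(sto_trans rqk)]; exact/negP/sto_asym.
by rewrite orbF.
Qed.

Lemma count_betw_triangle c p q s n :
  count_betw r c p q n <= count_betw r c p s n + count_betw r c s q n + 1.
Proof.
set pt_s := [set k : 'I_n | (c, val k) == s].
have pt_s_le1 : #|pt_s| <= 1.
  by apply/card_le1_eqP => k1 k2; rewrite !inE => /eqP <- /eqP[/val_inj ->].
apply: leq_trans (leq_add (leq_card_setU _ _) pt_s_le1).
apply: leq_trans (leq_card_setU _ pt_s); apply: subset_leq_card.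
apply/fintype.subsetP => k; rewrite !inE /betweenb.
have [->|/eqP ks] := eqVneq (c, val k) s; first by rewrite !orbT.
have [rsk|rks] := sto_total (nesym ks);
  by case/orP; case/andP=> h1 h2; rewrite ?h1 ?h2 ?rsk ?rks ?orbT.
Qed.

(* The r-least such k has all the other ones between (c, k) and y. *)
Lemma card_close_below_le c y n m :
  #|[set k : 'I_n | r (c, val k) y && (count_betw r c (c, val k) y n <= m)]| <= m.+1.
Proof.
set S := [set k : 'I_n | _].
have [->|[u0 Su0]] := set_0Vmem S; first by rewrite cards0.
pose rank (v : 'I_n) := #|[set v' in S | r (c, val v') (c, val v)]|.
case: (@arg_minnP _ u0 (mem S) rank Su0) => u /= Su rank_min.
move: (Su); rewrite inE => /andP[ruy le_m].
rewrite (cardsD1 u) Su add1n ltnS; apply: leq_trans le_m.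
apply: subset_leq_card; apply/fintype.subsetP => v /setD1P[vu Sv].
move: (Sv); rewrite !inE /betweenb => /andP[-> _]; rewrite andbT.
have [->//|rvu] : r (c, val u) (c, val v) \/ r (c, val v) (c, val u).
  by apply: sto_total => -[/val_inj uv]; rewrite uv eqxx in vu.
suff: rank v < rank u by rewrite ltnNge rank_min.
apply: proper_card; apply/properP; split.
  by apply/fintype.subsetP => z; rewrite !inE => /andP[-> rzv]; exact: sto_trans rzv rvu.
by exists v; rewrite inE ?Sv ?rvu ?(negbTE (sto_irr _)) ?andbF.
Qed.
End StrictTotalOrder.

Lemma card_close_le r (hr : strict_total_order r) c y n m :
  #|[set k : 'I_n | ((c, val k) != y) && (count_betw r c (c, val k) y n <= m)]|
    <= m.+1.*2.
Proof.
rewrite -addnn.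
apply: leq_trans (leq_add (card_close_below_le hr c y n m)
  (card_close_below_le (strict_total_order_flip hr) c y n m)).
apply: leq_trans (leq_card_setU _ _); apply: subset_leq_card; apply/fintype.subsetP => k.
rewrite !inE count_betw_flip => /andP[/eqP ky ->]; rewrite !andbT.
by have [] := sto_total hr ky => ->; rewrite ?orbT.
Qed.

Local Open Scope classical_set_scope.
Local Open Scope ring_scope.

Section LimnSup.
Variable R : realType.
Implicit Types u v : R^o^nat.

Lemma bounded_fun_of_le u (M : R) : (forall n, `|u n| <= M) -> bounded_fun u.
Proof.
move=> le_uM; exists M; split; first exact: num_real.
by move=> x ltMx n _; apply: le_trans (le_uM n) (ltW ltMx).
Qed.

Lemma le_limn_sup u v : bounded_fun u -> bounded_fun v -> (forall n, u n <= v n) ->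
  limn_sup u <= limn_sup v.
Proof.
move=> bu bv le_uv; rewrite !limn_supE //; apply: lb_le_inf; first by exists (sups v 0), 0%N.
move=> _ [n _ <-]; apply: le_trans (ge_inf _ _) _.
- exact: bounded_fun_has_lbound_sups.
- by exists n.
apply: ge_sup; first by exists (u n), n => /=.
by move=> _ [k /= nk <-]; apply: le_trans (le_uv k) _; apply: ub_le_sup;
  [exact/has_ubound_sdrop/bounded_fun_has_ubound | exists k].
Qed.

Lemma limn_sup_ltP u (e : R) : bounded_fun u -> limn_sup u < e ->
  exists N, forall n, (N <= n)%N -> u n < e.
Proof.
move=> bu; rewrite limn_supE // => /inf_lt[]; first by exists (sups u 0), 0%N.
move=> _ [N _ <-] supsN_lt; exists N => n Nn; apply: le_lt_trans supsN_lt.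
by apply: ub_le_sup; [exact/has_ubound_sdrop/bounded_fun_has_ubound | exists n].
Qed.
End LimnSup.

Section Density.
Variables (R : realType) (r : rel I0).
Hypothesis hr : strict_total_order r.

Definition betw_ratio c p q : R^o^nat :=
  fun n => (count_betw r c p q n.+1)%:R / (2 * n.+1%:R).

Definition betw_density c p q : R := limn_sup (betw_ratio c p q).

Lemma betw_ratio_ge0 c p q n : 0 <= betw_ratio c p q n.
Proof. by rewrite divr_ge0. Qed.

Lemma bounded_betw_ratio c p q : bounded_fun (betw_ratio c p q).
Proof.
apply: (@bounded_fun_of_le _ _ 1) => n; rewrite ger0_norm ?betw_ratio_ge0 //.
rewrite ler_pdivrMr ?mulr_gt0 // mul1r.
apply: (@le_trans _ _ n.+1%:R); first by rewrite ler_nat; exact: count_betw_le.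
by rewrite ler_peMl // ler1n.
Qed.

Lemma betw_density_ge0 c p q : 0 <= betw_density c p q.
Proof.
rewrite -[0](cvg_limn_inf_sup (cvg_cst (0 : R^o))).2.
apply: le_limn_sup (bounded_betw_ratio c p q) _; last exact: betw_ratio_ge0.
by apply: (@bounded_fun_of_le _ _ 0) => n; rewrite normr0.
Qed.

Lemma betw_densityC c p q : betw_density c p q = betw_density c q p.
Proof. by congr limn_sup; apply/funext => n; rewrite /betw_ratio count_betwC. Qed.

Lemma betw_density_id c p : betw_density c p p = 0.
Proof.
rewrite -[RHS](cvg_limn_inf_sup (cvg_cst (0 : R^o))).2; congr limn_sup.
by apply/funext => n; rewrite /betw_ratio count_betw_id // mul0r.
Qed.

Lemma betw_ratio_triangle c p q s n :
  betw_ratio c p q n <= betw_ratio c p s n + betw_ratio c s q n + harmonic n.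
Proof.
rewrite /betw_ratio -mulrDl -natrD /harmonic /=.
have -> : n.+1%:R^-1 = 2%:R / (2 * n.+1%:R) :> R.
  by rewrite invfM mulrA mulfV ?mul1r // pnatr_eq0.
rewrite -mulrDl ler_pM2r ?invr_gt0 ?mulr_gt0 // -natrD ler_nat.
by apply: leq_trans (count_betw_triangle hr c p q s n.+1) _; rewrite leq_add2l.
Qed.

Lemma betw_density_triangle c p q s :
  betw_density c p q <= betw_density c p s + betw_density c s q.
Proof.
have b1 := bounded_betw_ratio c p s; have b2 := bounded_betw_ratio c s q.
have bh : bounded_fun (harmonic : R^o^nat).
  by apply: cvg_seq_bounded; apply/cvg_ex; exists 0; exact: cvg_harmonic.
apply: le_trans (le_limn_sup (bounded_betw_ratio c p q) _ (betw_ratio_triangle c p q s)) _.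
  exact/bounded_funD/bh/bounded_funD.
apply: le_trans (le_limn_supD (bounded_funD b1 b2) bh) _.
rewrite (cvg_limn_inf_sup cvg_harmonic).2 addr0.
exact: le_limn_supD.
Qed.

Lemma dfunE p q : dfun R r p q = betw_density false p q + betw_density true p q.
Proof.
rewrite /dfun; have [<-|/eqP pq] := eqVneq p q; first by rewrite !betw_density_id addr0.
have dist_ordE x y : r x y -> dist_ord R r x y = betw_density false x y + betw_density true x y.
  move=> rxy; congr (limn_sup _ + limn_sup _); apply/funext => n;
  by rewrite /betw_ratio count_between_betw.
case: ifP => [/dist_ordE //|/negbT rpq].
have rqp : r q p by case: (sto_total hr pq) => // rpq'; rewrite rpq' in rpq.
by rewrite dist_ordE // betw_densityC [betw_density true _ _]betw_densityC.
Qed.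
End Density.

Lemma is_metric_dfun (R : realType) (r : rel I0) : strict_total_order r ->
  (forall x y, x <> y -> 0 < dfun R r x y) -> is_metric (dfun R r).
Proof.
move=> hr dfun_gt0.
split; [|split; [|split]] => [x y|x y|x y|x y z]; rewrite ?dfunE //.
- by rewrite addr_ge0 ?betw_density_ge0.
- split=> [|->]; last by rewrite !(betw_density_id R hr) addr0.
  by apply: contra_eq => /eqP/dfun_gt0; rewrite dfunE // => /gt_eqF ->.
- by rewrite betw_densityC [betw_density _ _ true _ _]betw_densityC.
- by rewrite addrACA lerD ?betw_density_triangle.
Qed.

Section ComparisonEvents.
Context d (T : measurableType d) (ord : T -> rel I0).
Hypothesis measurable_ord : forall x y, measurable [set w | ord w x y].

Lemma measurable_comparisons (J : finType) (e : J -> I0 * I0) (Q : (J -> bool) -> Prop) :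
  measurable [set w | Q (fun j => ord w (e j).1 (e j).2)].
Proof.
have -> : [set w | Q (fun j => ord w (e j).1 (e j).2)] =
    \bigcup_(g in [set g : {ffun J -> bool} | Q g])
      \bigcap_(j in [set: J]) [set w | ord w (e j).1 (e j).2 = g j].
  apply/seteqP; split=> [w Qw|w [g Qg gw]] /=.
    have patternE : fun_of_fin [ffun j => ord w (e j).1 (e j).2] = fun j => ord w (e j).1 (e j).2.
      by apply/funext => j; rewrite ffunE.
    by exists [ffun j => ord w (e j).1 (e j).2]; rewrite /= ?patternE // => j _; rewrite ffunE.
  by rewrite (_ : (fun j => _) = g) //; apply/funext => j; rewrite (gw j I).
apply: fin_bigcup_measurable => [|g _]; first exact: finite_finset.
apply: fin_bigcap_measurable => [|j _]; first exact: finite_finset.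
case: (g j); first exact: measurable_ord.
rewrite (_ : [set w | _ = false] = ~` [set w | ord w (e j).1 (e j).2]).
  exact/measurableC/measurable_ord.
by apply/seteqP; split=> w /=; case: ord.
Qed.

Lemma measurable_count_betw c p q n (Q : nat -> Prop) :
  measurable [set w | Q (count_betw (ord w) c p q n)].
Proof.
pose pt (u : 'I_n + bool) : I0 :=
  match u with inl k => (c, val k) | inr false => p | inr true => q end.
exact: (measurable_comparisons (fun uv => (pt uv.1, pt uv.2)) (fun h =>
  Q #|[set k : 'I_n | (h (inr false, inl k) && h (inl k, inr true))
                   || (h (inr true, inl k) && h (inl k, inr false))]%SET|)).
Qed.
End ComparisonEvents.

Lemma exchangeable_count_betw d (T : measurableType d) (R : realType)
    (P : probability T R) (ord : T -> rel I0) (n : nat) (c : bool) (k k' : 'I_n)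
    (y : bool * 'I_n) (Phi : nat -> Prop) :
  exchangeable P ord -> (c, k) != y -> (c, k') != y ->
  P [set w | Phi (count_betw (ord w) c (c, val k) (embI y) n)] =
  P [set w | Phi (count_betw (ord w) c (c, val k') (embI y) n)].
Proof.
move=> ord_exch ky k'y.
(* Swapping the labels k and k' of colour c fixes y. *)
pose pi := tperm k k'.
pose s : 'S_n := if c then 1%g else pi.
pose t : 'S_n := if c then pi else 1%g.
pose cnt (o : rel (bool * 'I_n)) (u v : bool * 'I_n) :=
  #|[set j : 'I_n | (o u (c, j) && o (c, j) v) || (o v (c, j) && o (c, j) u)]%SET|.
have relabel_c j : relabel (s^-1)%g (t^-1)%g (c, j) = (c, pi j).
  by rewrite /relabel /s /t /pi; case: (c) => /=; rewrite tpermV.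
have relabel_y : relabel (s^-1)%g (t^-1)%g y = y.
  case: y ky k'y => b j; rewrite /relabel /s /t /pi /=.
  have [<- ky k'y|/negPf bc _ _] := eqVneq c b; last first.
    by case: (b) (c) bc => [] [] //= _; rewrite invg1 perm1.
  have kj : k != j by apply: contraNneq _ ky => ->.
  have k'j : k' != j by apply: contraNneq _ k'y => ->.
  by case: (c); rewrite /= tpermV tpermD.
have cnt_permuted w :
    cnt (permuted_order s t (ord w)) (c, k) y = count_betw (ord w) c (c, val k') (embI y) n.
  rewrite /cnt /count_betw -(card_preimset _ (@perm_inj _ pi)).
  apply: eq_card => j; rewrite !inE /permuted_order /induced_order.
  by rewrite !relabel_c relabel_y /pi tpermL tpermK.
rewrite [LHS](ord_exch n s t (fun o => Phi (cnt o (c, k) y))).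
by congr (P _); apply/seteqP; split=> w /=; rewrite cnt_permuted.
Qed.

Lemma fineK_probability d (T : measurableType d) (R : realType) (P : probability T R)
    (A : set T) :
  measurable A -> (fine (P A))%:E = P A.
Proof.
move=> mA; apply: fineK; rewrite ge0_fin_numE ?measure_ge0 //.
exact: le_lt_trans (probability_le1 P mA) (ltry _).
Qed.

Lemma sum_probability_le d (T : measurableType d) (R : realType) (P : probability T R)
    (I : finType) (E : I -> set T) (M : nat) :
  (forall k, measurable (E k)) -> (forall w, #|[set k | w \in E k]%SET| <= M)%N ->
  (\sum_(k : I) P (E k) <= M%:R%:E)%E.
Proof.
move=> mE card_le.
have -> : (\sum_(k : I) P (E k) = \sum_(k : I) \int[P]_(w in setT) (\1_(E k) w)%:E)%E.
  by apply: eq_bigr => k _; rewrite integral_indic // setIT.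
rewrite -ge0_integral_sum //; last by move=> k; exact/measurable_EFinP/measurable_indic.
apply: le_trans (_ : (\int[P]_(w in setT) (cst M%:R%:E w) <= _)%E); last first.
  by rewrite integral_cst // [X in (_ * X <= _)%E]probability_setT mule1.
apply: ge0_le_integral => //.
- by move=> w _; apply: sume_ge0 => k _; rewrite lee_fin indicE.
- by apply: emeasurable_sum => k; exact/measurable_EFinP/measurable_indic.
move=> w _; rewrite sumEFin lee_fin /=.
have -> : \sum_(k : I) (\1_(E k) w : R) = #|[set k | w \in E k]%SET|%:R.
  rewrite -sum1_card natr_sum [RHS]big_mkcond /=; apply: eq_bigr => k _.
  by rewrite inE indicE; case: (w \in E k).
by rewrite ler_nat.
Qed.

Lemma card_pair_neq_ge n c (y : bool * 'I_n) : (n.-1 <= #|[pred k : 'I_n | (c, k) != y]|)%N.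
Proof.
rewrite -[n in n.-1]card_ord -(cardsC1 y.2); apply: subset_leq_card.
by apply/fintype.subsetP => k; rewrite !inE; apply: contra_neq => <-.
Qed.

Lemma prob_count_betw_le d (T : measurableType d) (R : realType) (P : probability T R)
    (ord : T -> rel I0) n c (i : 'I_n) (y : bool * 'I_n) m :
  random_total_order ord -> exchangeable P ord -> (c, i) != y ->
  n.-1%:R * fine (P [set w | count_betw (ord w) c (c, val i) (embI y) n <= m]%N)
    <= (m.+1).*2%:R.
Proof.
move=> [ord_sto ord_meas] ord_exch iy.
set E := [set w | _]; set p := fine (P E).
pose Ek (k : 'I_n) :=
  [set w | (c, k) != y /\ (count_betw (ord w) c (c, val k) (embI y) n <= m)%N].
have mEk k : measurable (Ek k).
  exact: (measurable_count_betw ord_meas _ _ _ _ (fun z => (c, k) != y /\ (z <= m)%N)).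
have PEk k : P (Ek k) = (if (c, k) != y then p else 0)%:E.
  case: ifPn => [ky|/negPn ky].
    rewrite /p fineK_probability; last first.
      exact: (measurable_count_betw ord_meas _ _ _ _ (fun z => (z <= m)%N)).
    rewrite (exchangeable_count_betw (fun z => (z <= m)%N) ord_exch iy ky).
    by congr (P _); apply/seteqP; split=> w /=; [case | split].
  by rewrite (_ : Ek k = set0) ?measure0 //; apply/seteqP; split=> w // [/negP].
have card_le w : (#|[set k | w \in Ek k]%SET| <= (m.+1).*2)%N.
  apply: leq_trans (card_close_le (ord_sto w) c (embI y) n m).
  apply: subset_leq_card; apply/fintype.subsetP => k; rewrite !inE => -[ky ->].
  rewrite andbT; apply: contra_neq ky => -[-> /val_inj ->].
  by rewrite -surjective_pairing.
have := sum_probability_le P mEk card_le.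
rewrite (eq_bigr _ (fun k _ => PEk k)) sumEFin -big_mkcond /= sumr_const lee_fin.
apply: le_trans; rewrite -[p *+ _]mulr_natl ler_wpM2r ?fine_ge0 ?measure_ge0 // ler_nat.
exact: card_pair_neq_ge.
Qed.

Lemma ler_five_div_succ (R : realFieldType) (n K m : nat) (p : R) : 0 <= p ->
  n%:R * p <= (m.+1).*2%:R -> (m * K.+1 <= (n.+1).*2)%N -> (K.*2 + 6 <= n)%N ->
  p <= 5 / K.+1%:R.
Proof.
move=> p_ge0 np_le mK_le n_ge.
have n_gt0 : 0 < n%:R :> R by rewrite ltr0n; lia.
rewrite ler_pdivlMr ?ltr0n // -(ler_pM2l n_gt0) mulrA.
apply: le_trans (_ : (m.+1).*2%:R * K.+1%:R <= _); first by rewrite ler_wpM2r.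
rewrite -!natrM ler_nat; nia.
Qed.

Lemma le0_le_div_succ (R : realType) (x C : R) : (forall K : nat, x <= C / K.+1%:R) -> x <= 0.
Proof.
move=> le_x; rewrite leNgt; apply/negP => x_gt0.
have := le_x (Num.truncn (C / x)); apply/negP; rewrite -ltNge ltr_pdivrMr // mulrC.
by rewrite -ltr_pdivrMr // truncnS_gt.
Qed.

Lemma measure_liminf_set_le d (T : measurableType d) (R : realType)
    (mu : {measure set T -> \bar R}) (A : (set T)^nat) (b : \bar R) (N0 : nat) :
  (forall n, measurable (A n)) -> (forall n, (N0 <= n)%N -> mu (A n) <= b)%E ->
  (mu (\bigcup_N \bigcap_l A (l + N)%N) <= b)%E.
Proof.
move=> mA muA_le; pose F N := \bigcap_l A (l + N)%N.
have mF N : measurable (F N) by apply: bigcapT_measurable => l.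
have F_nd : {homo F : N N' / (N <= N')%N >-> (N <= N')%O}.
  move=> N N' NN'; rewrite subsetEset => w Fw l _.
  by have := Fw (l + (N' - N))%N I; rewrite -addnA subnK.
have muF_cvg := nondecreasing_cvg_mu (mu := mu) mF (bigcupT_measurable F mF) F_nd.
rewrite -(cvg_lim _ muF_cvg) //; apply: lime_le; first by apply/cvg_ex; eexists; exact: muF_cvg.
apply: nearW => N; apply: le_trans (muA_le (N0 + N)%N (leq_addr _ _)).
by apply: le_measure; rewrite ?inE // => w /(_ N0 I).
Qed.

Section RandomOrder.
Variables (d : measure_display) (T : measurableType d) (R : realType).
Variables (P : probability T R) (ord : T -> rel I0).
Hypotheses (ord_rto : random_total_order ord) (ord_exch : exchangeable P ord).

Lemma prob_betw_ratio_small c i y K n : (c, i) <> y ->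
  ((maxn i y.2).+1 + K.*2 + 6 <= n)%N ->
  (P [set w | (betw_ratio R (ord w) c (c, i) y n < K.+1%:R^-1)%R] <= (5 / K.+1%:R)%:E)%E.
Proof.
move=> iy n_ge; have [_ ord_meas] := ord_rto.
have i_lt : (i < n.+1)%N by lia.
have y2_lt : (y.2 < n.+1)%N by lia.
pose yv : bool * 'I_n.+1 := (y.1, Ordinal y2_lt).
have yvE : embI yv = y by rewrite /embI /= -surjective_pairing.
have iyv : (c, Ordinal i_lt) != yv.
  by apply/eqP => -[ci iy2]; apply: iy; rewrite ci iy2 -surjective_pairing.
pose m := ((n.+1).*2 %/ K.+1)%N.
set S := [set w | count_betw (ord w) c (c, i) y n.+1 <= m]%N.
have mS : measurable S by exact: (measurable_count_betw ord_meas _ _ _ _ (fun z => (z <= m)%N)).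
apply: le_trans (le_measure _ _ _ (_ : _ `<=` S)) _; rewrite ?inE //.
- exact: (measurable_count_betw ord_meas _ _ _ _ (fun z => z%:R / (2 * n.+1%:R) < K.+1%:R^-1)).
- move=> w /=; rewrite /betw_ratio ltr_pdivrMr ?mulr_gt0 // mulrC ltr_pdivlMr //.
  by rewrite -!natrM ltr_nat mul2n => /ltnW; rewrite /S /= leq_divRL.
suff : ((fine (P S))%:E <= (5 / K.+1%:R)%:E)%E by rewrite fineK_probability.
rewrite lee_fin.
have := prob_count_betw_le m ord_rto ord_exch iyv; rewrite yvE /= => /ler_five_div_succ.
by apply; rewrite ?fine_ge0 ?measure_ge0 ?leq_divM //; lia.
Qed.

Lemma dfun_gt0_ae x y : x <> y -> {ae P, forall w, 0 < dfun R (ord w) x y}.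
Proof.
case: x => c i xy; have [ord_sto ord_meas] := ord_rto.
pose A K n := [set w | betw_ratio R (ord w) c (c, i) y n < K.+1%:R^-1].
have mA K n : measurable (A K n).
  exact: (measurable_count_betw ord_meas _ _ _ _ (fun z => z%:R / (2 * n.+1%:R) < K.+1%:R^-1)).
pose M := \bigcap_K \bigcup_N \bigcap_l A K (l + N)%N.
have mM : measurable M.
  by apply: bigcapT_measurable => K; apply: bigcupT_measurable => N; exact: bigcapT_measurable.
have PM0 : P M = 0%E.
  have PM_le K : (P M <= (5 / K.+1%:R)%:E)%E.
    apply: le_trans (measure_liminf_set_le (mA K) (fun n => @prob_betw_ratio_small c i y K n xy)).
    apply: le_measure; rewrite ?inE //; last by move=> w /(_ K I).
    by apply: bigcupT_measurable => N; exact: bigcapT_measurable.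
  apply/eqP; rewrite eq_le measure_ge0 andbT.
  suff : ((fine (P M))%:E <= 0)%E by rewrite fineK_probability.
  rewrite lee_fin; apply: le0_le_div_succ => K.
  by rewrite -lee_fin fineK_probability //; exact: PM_le.
exists M; split=> // w /= not_gt0 K _.
have dfun_le0 : dfun R (ord w) (c, i) y <= 0 by rewrite leNgt; apply/negP.
rewrite (dfunE _ (ord_sto w)) in dfun_le0.
have density_le0 : betw_density R (ord w) c (c, i) y <= 0.
  move: dfun_le0; have := betw_density_ge0 R (ord w) false (c, i) y.
  by have := betw_density_ge0 R (ord w) true (c, i) y; case: (c) => /=; lra.
have inv_gt0 : 0 < K.+1%:R^-1 :> R by rewrite invr_gt0.
have [N ratio_lt] := limn_sup_ltP (bounded_betw_ratio R (ord w) c (c, i) y)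
  (le_lt_trans density_le0 inv_gt0).
by exists N => // l _; apply: ratio_lt; rewrite leq_addl.
Qed.
End RandomOrder.

Theorem mainTheorem4 (d : measure_display) (T : measurableType d) (R : realType)
    (P : probability T R) (ord : T -> I0 -> I0 -> bool) :
  random_total_order ord -> exchangeable P ord ->
  (forall x y : I0, x <> y -> {ae P, forall w, 0 < dfun R (ord w) x y}) /\
  {ae P, forall w, is_metric (dfun R (ord w))}.
Proof.
move=> ord_rto ord_exch; have dfun_gt0 := dfun_gt0_ae ord_rto ord_exch.
split=> //.
pose pos_pair k w := if @unpickle (I0 * I0)%type k is Some (x, y)
  then x <> y -> 0 < dfun R (ord w) x y else True.
have : {ae P, forall w, forall k, pos_pair k w}.
  apply: ae_foralln => k; rewrite /pos_pair; case: unpickle => [[x y]|]; last exact: aeW.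
  have [<-|/eqP xy] := eqVneq x y; first by apply: aeW => w /(_ erefl).
  by apply: filterS (dfun_gt0 _ _ xy) => w ? _.
apply: filterS => w all_pos; apply: is_metric_dfun (proj1 ord_rto w) _ => x y xy.
by have := all_pos (pickle (x, y)); rewrite /pos_pair pickleK; apply.
Qed.
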